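(* Let $C>0$ and $p_0\in(0,1)$ with $Cp_0<1$ be constants such that for every $0<p\le p_0$ and $q\in[0,1]$, $\mathcal G(p,q)$ survives with positive probability whenever $q<\frac25p(1-Cp)$ and dies out almost surely whenever $q>\frac25p(1+Cp)$. Then there exist $C'>0$ and $\Omega_0\in\mathbb N$ such that for every integer $\Omega\ge\Omega_0$ the following holds. For any $\rho\in\big(0,(1+\min(p_0,(2C)^{-1}))(\Omega-1)^{-1}\big]$ let $p(\rho)=(\Omega-1)\rho-1$, let $q_b=(\Omega-1)^{-2}$ and $\hat\rho_c=(\Omega-1)^{-1}+\frac52(\Omega-1)^{-3}$. If $\rho>\hat\rho_c+C'\Omega^{-5}$, then $\mathcal G(p(\rho),q_b)$ survives with positive probability; if $\rho<\hat\rho_c-C'\Omega^{-5}$, then $\mathcal G(p(\rho),q_b)$ dies out almost surely.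
   Context: For $p>-1$ and $q\in[0,1]$ the graph process $\mathcal G(p,q)=(G_n)_{n\ge0}$, $G_n=(V_n,E_n)$, is defined recursively. For each $n$, $I_n\subseteq V_n$ is the set of vertices of the $n$-th generation: $I_0=V_0$ and $I_n=V_n\setminus V_{n-1}$ for $n\ge1$. $G_0$ is a single vertex with no edges. For $n\ge1$, given $G_{n-1}$: 1. For each $u\in I_{n-1}$ let $k_u$ be the number of vertices of $G_{n-1}$ at graph distance exactly $3$ from $u$. Each $u\in I_{n-1}$ has an independent Poisson$(1+p)$ number of potential offspring, and each potential offspring is independently deleted with probability $1-(1-q)^{k_u}$. Form $\tilde G_n$ by adding to $G_{n-1}$ a new vertex for each surviving offspring, joined by an edge to its parent; let $\tilde I_n$ be the set of these new vertices, arbitrarily ordered, $Y_n=|\tilde I_n|$. 2. Let $(B_{i,j})_{1\le i<j\le Y_n}$ be i.i.d. Bernoulli$(q)$. For $i<j$, if the $i$th and $j$th vertices of $\tilde I_n$ are at graph distance exactly $4$ in $\tilde G_n$ and $B_{i,j}=1$, identify them. Form $G_n$ and $I_n$ by merging each equivalence class of the equivalence relation generated by these identifications into one vertex, with edge set the union of their edge sets (multi-edges replaced by single edges). Let $Z_n=|I_n|$. The process survives if $Z_n>0$ for all $n\ge1$; otherwise it dies out. *)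

From HB Require Import structures.
From mathcomp Require Import all_boot all_order all_algebra.
From mathcomp Require Import boolp classical_sets reals ereal esum.
From mathcomp Require Import sequences.
From mathcomp.analysis Require Import exp.
Set Implicit Arguments. Unset Strict Implicit. Unset Printing Implicit Defensive.
Import Order.TTheory GRing.Theory Num.Theory.
Local Open Scope ring_scope.

Definition edges := seq (nat * nat).

Definition nbrs (E : edges) (x : nat) : seq nat :=
  [seq e.2 | e <- E & e.1 == x] ++ [seq e.1 | e <- E & e.2 == x].

(* ball E x k : the vertices at graph distance <= k from x (with repetitions) *)
Fixpoint ball (E : edges) (x : nat) (k : nat) : seq nat :=
  match k with
  | 0 => [:: x]
  | k'.+1 => let b := ball E x k' in b ++ flatten [seq nbrs E y | y <- b]
  end.

Definition at_dist (E : edges) (x y k : nat) : bool :=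
  (y \in ball E x k) && (if k is k'.+1 then y \notin ball E x k' else true).

(* nv : vertex labels used are 0..nv-1 (labels not incident to any edge and
   not in gen are phantom isolated labels left over after merging; they are at
   infinite distance from everything and play no role);
   edg : edge list; gen : the current generation I_{n-1}, in some order. *)
Record state := State { nv : nat; edg : edges; gen : seq nat }.

Definition init_state : state := State 1 [::] [:: 0%N].

Definition kcount (s : state) (u : nat) : nat :=
  count (fun v => at_dist (edg s) u v 3) (iota 0 (nv s)).

(* Random input for one generation:
   - cnt : number of potential offspring of each u in gen (in order),
   - del : deletion bit of each potential offspring (true = deleted),
   - B   : B_{i,j} for 0 <= i < j < Y, row i listing j = i+1 .. Y-1. *)
Definition input := (seq nat * seq bool * seq (seq bool))%type.

Definition pot_parents (s : state) (cnt : seq nat) : seq nat :=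
  flatten [seq nseq x.2 x.1 | x <- zip (gen s) cnt].

Definition surv_parents (s : state) (cnt : seq nat) (del : seq bool) : seq nat :=
  [seq x.1 | x <- zip (pot_parents s cnt) del & ~~ x.2].

Definition bitB (B : seq (seq bool)) (i j : nat) : bool :=
  nth false (nth [::] B i) (j - i.+1).

Section Step.
Variables (s : state) (x : input).
Let cnt := x.1.1.
Let del := x.1.2.
Let B := x.2.
Let sp := surv_parents s cnt del.
Let Y := size sp.
Definition tildeE : edges := edg s ++ [seq (nv s + i, nth 0 sp i)%N | i <- iota 0 Y].
(* identification edges among new vertices *)
Definition idE : edges :=
  [seq (nv s + ij.1, nv s + ij.2)%N | ij <- allpairs pair (iota 0 Y) (iota 0 Y) &
     [&& ij.1 < ij.2, at_dist tildeE (nv s + ij.1) (nv s + ij.2) 4 & bitB B ij.1 ij.2]%N].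
(* representative (least label) of the equivalence class generated *)
Definition rep (v : nat) : nat := foldr minn v (ball idE v Y).
Definition mapv (v : nat) : nat := if (v < nv s)%N then v else rep v.
Definition step : state :=
  State (nv s + Y) [seq (mapv e.1, mapv e.2) | e <- tildeE]
        (undup [seq rep (nv s + i) | i <- iota 0 Y]).
Definition Ysize := Y.
End Step.

Section Prob.
Variables (R : realType) (p q : R).

Definition poisson (lam : R) (k : nat) : R := expR (- lam) * lam ^+ k / (k`!)%:R.

Definition well_shaped (s : state) (x : input) : bool :=
  [&& size x.1.1 == size (gen s), size x.1.2 == sumn x.1.1 &
      shape x.2 == [seq (Ysize s x - i.+1)%N | i <- iota 0 (Ysize s x)]].

Definition weight (s : state) (x : input) : R :=
  if well_shaped s x then
    (\prod_(y <- zip (gen s) x.1.1) poisson (1 + p) y.2) *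
    (\prod_(y <- zip (pot_parents s x.1.1) x.1.2)
        (if y.2 then 1 - (1 - q) ^+ kcount s y.1 else (1 - q) ^+ kcount s y.1)) *
    (\prod_(row <- x.2) \prod_(b <- row) (if b then q else 1 - q))
  else 0.

(* alive n s = P(Z_1 > 0, ..., Z_n > 0) for the process started from s *)
Fixpoint alive (n : nat) (s : state) : \bar R :=
  match n with
  | 0 => 1%E
  | n'.+1 => \esum_(x in [set: input])
       ((weight s x)%:E *
        (if (0 < size (gen (step s x)))%N then alive n' (step s x) else 0%E))%E
  end.

(* survival probability of G(p,q): P(Z_n > 0 for all n) = inf_n P(Z_1..Z_n > 0) *)
Definition surv_prob : \bar R := ereal_inf [set alive n init_state | n in [set: nat]].

Definition survives : Prop := (0 < surv_prob)%E.
Definition dies_out : Prop := surv_prob = 0%E.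
End Prob.

From HB Require Import structures.
From mathcomp Require Import all_boot all_order all_algebra.
From mathcomp Require Import boolp classical_sets reals ereal esum.
From mathcomp Require Import sequences fsbigop normedtype.
From mathcomp Require Import ring lra.
From mathcomp.analysis Require Import exp.

(* Writing p = (Omega-1) rho - 1 and q_b = (Omega-1)^-2, the condition
   rho > rhoc + C' Omega^-5 (resp. rho < rhoc - C' Omega^-5) becomes
   p > 5/2 q_b + e (resp. p < 5/2 q_b - e) with e of order C' q_b^2.  For C'
   large this margin beats the O(C q_b^2) error in the threshold
   q = 2/5 p (1 -+ C p), so the hypothesis settles every p > 0.
   The hypothesis says nothing about p <= 0.  There each parent has at most
   Poisson(1+p) children, so P(Z_n > 0) is at most the survival probability
   1 - f^n(0) of the Galton-Watson process with offspring generating function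
   f(s) = exp((1+p)(s-1)); since 1 + p <= 1, 1 - f(s) <= (1-s) - (1-s)^2/4,
   whence 1 - f^n(0) <= 4/(n+4). *)

Set Implicit Arguments.
Unset Strict Implicit.
Unset Printing Implicit Defensive.

Import Order.TTheory GRing.Theory Num.Theory.
Local Open Scope ring_scope.

Lemma big_zip_snd (R : Type) (idx : R) (op : R -> R -> R) (X T : Type)
    (xs : seq X) (l : seq T) (F : T -> R) :
  (size l <= size xs)%N ->
  \big[op/idx]_(y <- zip xs l) F y.2 = \big[op/idx]_(t <- l) F t.
Proof. by move=> H; rewrite -(big_map snd xpredT) -/(unzip2 _) unzip2_zip. Qed.

Lemma big_zip_shape (R : comNzRingType) (T : Type) (F : seq T -> R)
    (B : seq (seq T)) (sh : seq nat) :
  (if size B == size sh then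
     \prod_(y <- zip sh B) (if size y.2 == y.1 then F y.2 else 0) else 0) =
  (if shape B == sh then \prod_(row <- B) F row else 0).
Proof.
elim: B sh => [|row B IH] [|m sh] //=; first by rewrite !big_nil.
rewrite eqSS !big_cons eqseq_cons.
have := IH sh; case: (eqVneq (shape B) sh) => [<-|_].
  rewrite size_map !eqxx => ->.
  by rewrite andbT; case: eqP => _; rewrite ?mul0r.
by rewrite andbF; case: (size B == size sh) => // ->; rewrite mulr0.
Qed.

Section esum_lemmas.
Local Open Scope classical_set_scope.
Local Open Scope ereal_scope.
Variable R : realType.

Lemma esumZl (T : choiceType) (S : set T) (r : R) (a : T -> \bar R) :
  (0 <= r)%R -> (forall i, 0 <= a i) ->
  \esum_(i in S) (r%:E * a i) = r%:E * \esum_(i in S) a i.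
Proof.
move=> r0 a0; rewrite /esum -ereal_supZl //; last first.
  by apply/set0P; exists 0; exists set0; [exact: fsets_set0|rewrite fsbig_set0].
congr ereal_sup; apply/seteqP; split => y /=.
  move=> [A [finA AS] <-]; exists (\sum_(x \in A) a x); first by exists A.
  by rewrite !fsbig_finite// ge0_sume_distrr.
move=> [_ [A [finA AS] <-] <-]; exists A => //.
by rewrite !fsbig_finite// ge0_sume_distrr.
Qed.

Lemma esum_bool (f : bool -> \bar R) : (forall b, 0 <= f b) ->
  \esum_(b in [set: bool]) f b = f true + f false.
Proof.
move=> f0; rewrite (esumID [set true]) // setTI esum_set1 //; congr (_ + _).
rewrite (_ : [set: bool] `&` ~` [set true] = [set false]) ?esum_set1 //.
by apply/seteqP; split => [[]|b ->] //=; rewrite /setC /=; case.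
Qed.

Lemma esum_pair (A B : choiceType) (f : A * B -> \bar R) : (forall x, 0 <= f x) ->
  \esum_(x in [set: A * B]) f x =
  \esum_(a in [set: A]) \esum_(b in [set: B]) f (a, b).
Proof.
move=> f0; rewrite esum_esum //.
rewrite (_ : [set: A] `*`` (fun=> [set: B]) = [set: A * B]).
  by apply: eq_esum => -[].
by apply/seteqP; split.
Qed.

Lemma esum_size_cons (T : choiceType) n (a : seq T -> \bar R) :
  (forall l, 0 <= a l) ->
  \esum_(l in [set l : seq T | size l = n.+1]) a l =
  \esum_(t in [set: T]) \esum_(l in [set l : seq T | size l = n]) a (t :: l).
Proof.
move=> a0; rewrite esum_esum //.
rewrite (reindex_esum ([set: T] `*`` fun=> [set l : seq T | size l = n])
   [set l : seq T | size l = n.+1] (fun k => k.1 :: k.2)) //.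
split => /=.
- by move=> [t l] [_ /= ->].
- by move=> [t l] [t' l'] _ _ [-> ->].
- by move=> [|t l] //= [H]; exists (t, l).
Qed.

Lemma esum_size0 (T : choiceType) (a : seq T -> \bar R) : 0 <= a [::] ->
  \esum_(l in [set l : seq T | size l = 0%N]) a l = a [::].
Proof.
move=> a0; rewrite (_ : [set l : seq T | size l = 0%N] = [set [::]]) ?esum_set1 //.
by apply/seteqP; split => [[]|l ->].
Qed.

Lemma esum_zip_prod (T : choiceType) (X : Type) (xs : seq X)
    (G : X -> T -> R) (S : X -> R) :
  (forall x t, 0 <= G x t)%R ->
  (forall x, \esum_(t in [set: T]) (G x t)%:E = (S x)%:E) ->
  \esum_(l in [set: seq T])
     (if size l == size xs then \prod_(y <- zip xs l) G y.1 y.2 else 0)%:E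
   = (\prod_(x <- xs) S x)%:E.
Proof.
move=> G0 GS.
have S0 x : (0 <= S x)%R.
  by rewrite -lee_fin -GS; apply: esum_ge0 => t _; rewrite lee_fin.
have P0 (l : seq (X * T)) : 0 <= (\prod_(y <- l) G y.1 y.2)%:E.
  by rewrite lee_fin; apply: prodr_ge0 => y _.
transitivity (\esum_(l in [set l : seq T | size l = size xs])
                (\prod_(y <- zip xs l) G y.1 y.2)%:E).
  rewrite [RHS]esum_mkcond; apply: eq_esum => l _.
  by case: eqP => H; [rewrite mem_set | rewrite memNset].
elim: xs => [|x xs IH]; first by rewrite esum_size0 // !big_nil.
rewrite /= esum_size_cons //.
under eq_esum => t _.
  under eq_esum => l _ do rewrite /= big_cons EFinM.
  rewrite esumZl // IH muleC.
  over.
rewrite /= esumZl ?prodr_ge0 //; last by move=> t; rewrite lee_fin.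
by rewrite (eq_esum (b := fun t => (G x t)%:E)) // GS big_cons -EFinM mulrC.
Qed.

Lemma esum_expR (x : R) : (0 <= x)%R ->
  \esum_(k in [set: nat]) (x ^+ k / k`!%:R)%:E = (expR x)%:E.
Proof.
move=> x0; rewrite -nneseries_esumT; last first.
  by move=> k; rewrite lee_fin divr_ge0 // exprn_ge0.
rewrite /expR -EFin_lim; last exact: is_cvg_series_exp_coeff.
by apply: congr_lim; apply/funext => n /=; rewrite /series /= sumEFin.
Qed.

Lemma esum_poisson_pow (l a : R) : (0 <= l)%R -> (0 <= a)%R ->
  \esum_(k in [set: nat]) (poisson l k * a ^+ k)%:E = (expR (l * (a - 1)))%:E.
Proof.
move=> l0 a0.
have E k : (poisson l k * a ^+ k = expR (- l) * ((l * a) ^+ k / k`!%:R))%R.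
  by rewrite /poisson exprMn !mulrA mulrAC.
under eq_esum => k _ do rewrite E EFinM.
rewrite esumZl ?expR_ge0 //; last first.
  by move=> k; rewrite lee_fin divr_ge0 // exprn_ge0 // mulr_ge0.
rewrite esum_expR ?mulr_ge0 // -EFinM -expRD.
by rewrite mulrBr mulr1 addrC.
Qed.

End esum_lemmas.

Section real_lemmas.
Variable R : realType.

Lemma poisson_ge0 (l : R) k : 0 <= l -> 0 <= poisson l k.
Proof. by move=> l0; rewrite divr_ge0 // mulr_ge0 ?expR_ge0 // exprn_ge0. Qed.

Lemma sqr_sub_half_le_expRN (x : R) : x <= 2 -> (1 - x / 2) ^+ 2 <= expR (- x).
Proof.
move=> x2; have h : 0 <= 1 - x / 2 by rewrite subr_ge0 ler_pdivrMr // mul1r.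
have -> : - x = - (x / 2) + - (x / 2) by rewrite -opprD -splitr.
by rewrite expRD expr2; apply: ler_pM => //; exact: expR_ge1Dx.
Qed.

Lemma quadratic_decay (b : nat -> R) : b 0%N <= 1 ->
  (forall n, b n.+1 <= b n - b n ^+ 2 / 4) ->
  forall n, b n <= 4 / (n%:R + 4).
Proof.
move=> b0 bS; elim=> [|n IH]; first by rewrite add0r divff.
set N := n%:R + 4 in IH *; have N4 : 4 <= N by rewrite /N lerDr.
set t := 4 / N in IH *.
have t1 : t <= 1 by rewrite /t ler_pdivrMr ?mul1r // (lt_le_trans _ N4).
have mono : b n - b n ^+ 2 / 4 <= t - t ^+ 2 / 4.
  have : 0 <= (t - b n) * (1 - (t + b n) / 4).
    by apply: mulr_ge0; rewrite subr_ge0 // ler_pdivrMr //; lra.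
  rewrite !expr2; lra.
have last : t - t ^+ 2 / 4 <= 4 / ((n.+1)%:R + 4).
  have -> : n.+1%:R + 4 = N + 1 :> R by rewrite /N -[n.+1%:R]natr1; lra.
  have N0 : 0 < N by exact: lt_le_trans N4.
  have -> : 4 / (N + 1) = (t - t ^+ 2 / 4) + 4 / (N ^+ 2 * (N + 1)).
    by rewrite /t; field; rewrite !lt0r_neq0 // addr_gt0.
  by rewrite lerDl divr_ge0 // mulr_ge0 ?exprn_ge0 // addr_ge0 // ltW.
exact: le_trans (bS n) (le_trans mono last).
Qed.

End real_lemmas.

Section process.
Local Open Scope classical_set_scope.
Variables (R : realType) (p q : R).
Hypotheses (p_gt : -1 < p) (q_ge0 : 0 <= q) (q_le1 : q <= 1).

Definition offspring_weight (s : state) (c : seq nat) : R :=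
  \prod_(y <- zip (gen s) c) poisson (1 + p) y.2.

Definition deletion_weight (s : state) (c : seq nat) (d : seq bool) : R :=
  \prod_(y <- zip (pot_parents s c) d)
     (if y.2 then 1 - (1 - q) ^+ kcount s y.1 else (1 - q) ^+ kcount s y.1).

Definition merge_weight (B : seq (seq bool)) : R :=
  \prod_(row <- B) \prod_(b <- row) (if b then q else 1 - q).

Definition merge_shape (s : state) (c : seq nat) (d : seq bool) : seq nat :=
  [seq (size (surv_parents s c d) - i.+1)%N | i <- iota 0 (size (surv_parents s c d))].

Lemma weight_factor s c d B :
  weight p q s (c, d, B) =
  (if (size c == size (gen s)) && (size d == sumn c)
   then offspring_weight s c * deletion_weight s c d else 0) *
  (if shape B == merge_shape s c d then merge_weight B else 0).
Proof.
rewrite /weight /well_shaped /=.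
case: (size c == _); case: (size d == _); case: (shape B == _);
  by rewrite /= ?mul0r ?mulr0 ?mulr1.
Qed.

Lemma offspring_mean_gt0 : 0 < 1 + p.
Proof. by rewrite -ltrBlDl sub0r. Qed.

Lemma offspring_weight_ge0 s c : 0 <= offspring_weight s c.
Proof.
by apply: prodr_ge0 => y _; apply/poisson_ge0/ltW/offspring_mean_gt0.
Qed.

Lemma avoid_prob_ge0_le1 k : 0 <= (1 - q) ^+ k <= 1.
Proof. by rewrite exprn_ge0 ?exprn_ile1 // ?subr_ge0 // lerBlDr lerDl. Qed.

Lemma deletion_weight_ge0 s c d : 0 <= deletion_weight s c d.
Proof.
apply: prodr_ge0 => y _; have /andP[r0 r1] := avoid_prob_ge0_le1 (kcount s y.1).
by case: y.2; rewrite ?subr_ge0.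
Qed.

Lemma merge_weight_ge0 B : 0 <= merge_weight B.
Proof.
by apply: prodr_ge0 => row _; apply: prodr_ge0 => -[] _ //; rewrite subr_ge0.
Qed.

Lemma weight_ge0 s x : 0 <= weight p q s x.
Proof.
case: x => [[c d] B]; rewrite weight_factor.
apply: mulr_ge0; case: ifP => // _.
  by rewrite mulr_ge0 ?offspring_weight_ge0 ?deletion_weight_ge0.
exact: merge_weight_ge0.
Qed.

Lemma esum_merge_weight sh :
  \esum_(B in [set: seq (seq bool)])
     (if shape B == sh then merge_weight B else 0)%:E = 1%:E.
Proof.
pose f (b : bool) := if b then q else 1 - q.
have f0 b : 0 <= f b by case: b; rewrite /f ?subr_ge0.
have f1 : \esum_(b in [set: bool]) (f b)%:E = 1%:E.
  rewrite esum_bool; last by move=> b; rewrite lee_fin.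
  by rewrite -EFinD /f /= subrKC.
pose g m row := if size row == m then \prod_(b <- row) f b else 0.
have g0 m row : 0 <= g m row by rewrite /g; case: eqP => _ //; exact: prodr_ge0.
have g1 m : \esum_(row in [set: seq bool]) (g m row)%:E = 1%:E.
  have := @esum_zip_prod R _ _ (nseq m tt) _ (fun=> 1) (fun _ => f0) (fun _ => f1).
  rewrite big1 // => <-; apply: eq_esum => row _; rewrite /g size_nseq.
  by case: eqP => // H; rewrite big_zip_snd // size_nseq H.
have := @esum_zip_prod R _ _ sh _ (fun=> 1) g0 g1.
rewrite big1 // => <-; apply: eq_esum => B _.
by rewrite /g (@big_zip_shape _ _ (fun row => \prod_(b <- row) f b)).
Qed.

Lemma size_pot_parents s c :
  size c = size (gen s) -> size (pot_parents s c) = sumn c.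
Proof.
move=> Hc; rewrite /pot_parents size_flatten /shape -map_comp.
rewrite (eq_map (g := snd)); last by move=> x /=; rewrite size_nseq.
by rewrite -/(unzip2 _) unzip2_zip // Hc.
Qed.

Lemma esum_deletion_weight s c : size c = size (gen s) ->
  \esum_(d in [set: seq bool])
     (if size d == sumn c then deletion_weight s c d else 0)%:E = 1%:E.
Proof.
move=> Hc.
pose G u (b : bool) :=
  if b then 1 - (1 - q) ^+ kcount s u else (1 - q) ^+ kcount s u.
have G0 u b : 0 <= G u b.
  have /andP[r0 r1] := avoid_prob_ge0_le1 (kcount s u).
  by rewrite /G; case: b; rewrite ?subr_ge0.
have G1 u : \esum_(b in [set: bool]) (G u b)%:E = 1%:E.
  rewrite esum_bool; last by move=> b; rewrite lee_fin.
  by rewrite -EFinD /G /= subrK.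
have := @esum_zip_prod R _ _ (pot_parents s c) _ (fun=> 1) G0 G1.
by rewrite big1 // size_pot_parents.
Qed.

Lemma esum_offspring_weight_pow s (a : R) : 0 <= a ->
  \esum_(c in [set: seq nat])
     (if size c == size (gen s) then offspring_weight s c * a ^+ sumn c else 0)%:E =
  (expR ((1 + p) * (a - 1)) ^+ size (gen s))%:E.
Proof.
move=> a0.
pose G (u : nat) k := poisson (1 + p) k * a ^+ k.
have G0 u k : 0 <= G u k.
  by rewrite mulr_ge0 ?exprn_ge0 // poisson_ge0 // ltW // offspring_mean_gt0.
have G1 u : \esum_(k in [set: nat]) (G u k)%:E = (expR ((1 + p) * (a - 1)))%:E.
  by rewrite esum_poisson_pow // ltW // offspring_mean_gt0.
have := @esum_zip_prod R _ _ (gen s) _ _ G0 G1.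
rewrite big_const_seq count_predT iter_mulr_1 => <-.
apply: eq_esum => c _; case: eqP => // Hc.
by rewrite big_split prodrXr /= (@big_zip_snd _ _ _ _ _ _ _ id) ?Hc // sumnE.
Qed.

Lemma esum_weight_pow s (a : R) : 0 <= a ->
  \esum_(x in [set: input]) (weight p q s x * a ^+ sumn x.1.1)%:E =
  (expR ((1 + p) * (a - 1)) ^+ size (gen s))%:E.
Proof.
move=> a0; have an0 n : 0 <= a ^+ n by rewrite exprn_ge0.
pose P c := offspring_weight s c; pose D c d := deletion_weight s c d.
have PD0 c d : 0 <= P c * D c d.
  by rewrite mulr_ge0 ?offspring_weight_ge0 ?deletion_weight_ge0.
have sum_B (cd : seq nat * seq bool) :
    \esum_(B in [set: seq (seq bool)]) (weight p q s (cd, B) * a ^+ sumn cd.1)%:E =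
    ((if (size cd.1 == size (gen s)) && (size cd.2 == sumn cd.1)
      then P cd.1 * D cd.1 cd.2 else 0) * a ^+ sumn cd.1)%:E.
  case: cd => c d /=.
  under eq_esum => B _ do rewrite weight_factor mulrAC EFinM.
  rewrite esumZl ?esum_merge_weight ?mule1 //.
    by rewrite mulr_ge0 //; case: ifP.
  by move=> B; rewrite lee_fin; case: ifP => // _; exact: merge_weight_ge0.
have sum_D c : size c = size (gen s) ->
    \esum_(d in [set: seq bool])
      ((if size d == sumn c then P c * D c d else 0) * a ^+ sumn c)%:E =
    (P c * a ^+ sumn c)%:E.
  move=> Hc; under eq_esum => d _.
    rewrite (_ : _%:E = (P c * a ^+ sumn c)%:E * (if size d == sumn c then D c d else 0)%:E)%E;
      last by rewrite -EFinM; case: ifP; rewrite ?mul0r ?mulr0 // mulrAC.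
    over.
  rewrite esumZl ?esum_deletion_weight ?mule1 ?mulr_ge0 ?offspring_weight_ge0 //.
  by move=> d; rewrite lee_fin; case: ifP => // _; exact: deletion_weight_ge0.
rewrite esum_pair; last by move=> x; rewrite lee_fin mulr_ge0 ?weight_ge0.
under eq_esum => cd _ do rewrite sum_B.
rewrite esum_pair /=; last by move=> cd; rewrite lee_fin mulr_ge0 //; case: ifP.
rewrite -esum_offspring_weight_pow //; apply: eq_esum => c _.
case: eqP => Hc /=; last by rewrite mul0r esum1.
exact: sum_D.
Qed.

Lemma esum_weight_compl s (a : R) : 0 <= a <= 1 ->
  \esum_(x in [set: input]) (weight p q s x * (1 - a ^+ sumn x.1.1))%:E =
  (1 - expR ((1 + p) * (a - 1)) ^+ size (gen s))%:E.
Proof.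
move=> /andP[a0 a1].
have w0 x : 0 <= weight p q s x by exact: weight_ge0.
have total : \esum_(x in [set: input]) (weight p q s x)%:E = 1%:E.
  have := esum_weight_pow s ler01.
  rewrite subrr mulr0 expR0 expr1n => <-.
  by apply: eq_esum => x _; rewrite expr1n mulr1.
have := total; rewrite (eq_esum (b := fun x =>
  (weight p q s x * (1 - a ^+ sumn x.1.1))%:E + (weight p q s x * a ^+ sumn x.1.1)%:E)%E).
  rewrite esumD ?esum_weight_pow // => [H|x _|x _]; rewrite ?lee_fin.
  - by rewrite EFinB -H addeK.
  - by rewrite mulr_ge0 // subr_ge0 exprn_ile1.
  - by rewrite mulr_ge0 // exprn_ge0.
by move=> x _; rewrite -EFinD -mulrDr subrK mulr1.
Qed.

Fixpoint gw_extinct (n : nat) : R :=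
  if n is n'.+1 then expR ((1 + p) * (gw_extinct n' - 1)) else 0.

Lemma gw_extinct_ge0_le1 n : 0 <= gw_extinct n <= 1.
Proof.
elim: n => [|n /andP[_ e1]] /=; first by rewrite lexx ler01.
rewrite expR_ge0 expR_le1 mulr_ge0_le0 ?subr_le0 //.
exact/ltW/offspring_mean_gt0.
Qed.

Lemma size_gen_step s x : (size (gen (step s x)) <= sumn x.1.1)%N.
Proof.
rewrite /step /=; apply: leq_trans (size_undup _) _.
rewrite size_map size_iota /surv_parents size_map size_filter.
apply: leq_trans (count_size _ _) _; rewrite size_zip.
apply: leq_trans (geq_minl _ _) _.
rewrite /pot_parents size_flatten /shape -map_comp.
rewrite (eq_map (g := snd)); last by move=> y /=; rewrite size_nseq.
by elim: (gen s) x.1.1 => [|u g IH] [|k c] //=; rewrite leq_add2l.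
Qed.

Lemma alive_ge0 n s : (0 <= alive p q n s)%E.
Proof.
elim: n s => [|n IH] s //=; apply: esum_ge0 => x _.
by apply: mule_ge0; [rewrite lee_fin weight_ge0 | case: ifP].
Qed.

Lemma alive_le_gw n s : (0 < size (gen s))%N ->
  (alive p q n s <= (1 - gw_extinct n ^+ size (gen s))%:E)%E.
Proof.
elim: n s => [|n IH] s Hs /=.
  by rewrite expr0n; case: (size (gen s)) Hs => // k _; rewrite subr0.
have /andP[e0 e1] := gw_extinct_ge0_le1 n.
rewrite -esum_weight_compl ?gw_extinct_ge0_le1 //.
apply: le_esum => x _; rewrite EFinM; apply: lee_wpmul2l.
  by rewrite lee_fin weight_ge0.
case: ifP => Hx.
  apply: (le_trans (IH (step s x) Hx)); rewrite lee_fin lerB //.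
  exact/ler_wiXn2l/size_gen_step.
by rewrite lee_fin subr_ge0 exprn_ile1.
Qed.

Hypothesis p_le0 : p <= 0.

Lemma gw_survival_step n :
  1 - gw_extinct n.+1 <= (1 - gw_extinct n) - (1 - gw_extinct n) ^+ 2 / 4.
Proof.
have /andP[e0 e1] := gw_extinct_ge0_le1 n.
set b := 1 - gw_extinct n.
have b2 : b <= 2 by rewrite /b; lra.
have : expR (- b) <= gw_extinct n.+1.
  rewrite /= ler_expR -opprB mulrN lerN2 ler_piMl ?subr_ge0 //.
  by rewrite gerDl.
have := sqr_sub_half_le_expRN b2.
rewrite !expr2; lra.
Qed.

Lemma gw_survival_le n : 1 - gw_extinct n <= 4 / (n%:R + 4).
Proof.
apply: (quadratic_decay (b := fun k => 1 - gw_extinct k)) => [|k].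
  by rewrite subr0.
exact: gw_survival_step.
Qed.

Lemma dies_out_subcritical : dies_out p q.
Proof.
apply/eqP; rewrite eq_le; apply/andP; split; last first.
  by apply: le_ereal_inf_tmp => _ [n _ <-]; exact: alive_ge0.
apply/lee_addgt0Pr => e e0; rewrite add0e.
pose n := Num.Def.archi_bound (4 / e).
apply: ge_ereal_inf; exists (alive p q n init_state); first by exists n.
apply: le_trans (alive_le_gw n (s := init_state) _) _ => //=.
rewrite expr1 lee_fin (le_trans (gw_survival_le n)) // ler_pdivrMr; last first.
  by rewrite ltr_wpDl.
have h4e : 0 <= 4 / e by rewrite divr_ge0 // ltW.
have := archi_boundP h4e; rewrite -/n ltr_pdivrMr // => h.
rewrite mulrC mulrDl; apply/ltW/(lt_le_trans h).
by rewrite lerDl mulr_ge0 // ltW.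
Qed.

End process.

Section threshold_arithmetic.
Variable R : realType.

Lemma survival_margin (C a e p : R) : 0 < C -> e <= a / 2 ->
  9 * C * a ^+ 2 < e -> 5 / 2 * a + e < p -> 2 * C * p <= 1 ->
  a < 2 / 5 * p * (1 - C * p).
Proof.
move=> C0 ea2 Ce sp Cp.
have Ca : 0 <= C * a ^+ 2 by rewrite mulr_ge0 ?sqr_ge0 // ltW.
have e0 : 0 < e by lra.
have [s sE] : {s : R | s = 5 / 2 * a + e} by exists (5 / 2 * a + e).
rewrite -sE in sp.
have s0 : 0 <= s by lra.
have s3 : s <= 3 * a by lra.
have Cs : C * s ^+ 2 <= 9 * C * a ^+ 2.
  have : s ^+ 2 <= (3 * a) ^+ 2 by rewrite lerXn2r ?nnegrE; lra.
  rewrite !expr2 => h; nra.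
have Cs_le : C * s <= C * p by rewrite ler_pM2l // ltW.
have ps : 0 <= p - s by lra.
have Cps : 0 <= 1 - C * (p + s) by lra.
have mono := mulr_ge0 ps Cps.
rewrite !expr2 in Cs; lra.
Qed.

Lemma extinction_margin (C a e p : R) : 0 < C -> 0 < p ->
  25 / 4 * C * a ^+ 2 <= e -> p < 5 / 2 * a - e ->
  2 / 5 * p * (1 + C * p) < a.
Proof.
move=> C0 p0 Ce ps.
have Ca : 0 <= C * a ^+ 2 by rewrite mulr_ge0 ?sqr_ge0 // ltW.
have e0 : 0 <= e by lra.
have Cp : C * p <= C * (5 / 2 * a) by rewrite ler_pM2l //; lra.
have Cp0 : 0 <= C * p by rewrite mulr_ge0 // ltW.
have Cae : 0 <= C * a * e by rewrite !mulr_ge0 // ltW //; lra.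
have h1 : p * (1 + C * p) < (5 / 2 * a - e) * (1 + C * p) by rewrite ltr_pM2r; lra.
have h2 : (5 / 2 * a - e) * (1 + C * p) <= (5 / 2 * a - e) * (1 + C * (5 / 2 * a)).
  by rewrite ler_pM2l; lra.
rewrite expr2 in Ce; lra.
Qed.

Lemma pow5_shift_bounds (W : R) : 1 <= W -> W ^- 4 / 32 <= W / (W + 1) ^+ 5 <= W ^- 4.
Proof.
move=> W1; have W0 : 0 < W by exact: lt_le_trans W1.
have le_div x y : 0 < x -> x <= y -> W / y <= W / x.
  by move=> x0 xy; rewrite ler_pM2l // lef_pV2 // posrE (lt_le_trans x0).
have -> : W ^- 4 / 32 = W / (2 * W) ^+ 5 by field; rewrite lt0r_neq0.
have -> : W ^- 4 = W / W ^+ 5 by field; rewrite lt0r_neq0.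
apply/andP; split; apply: le_div; rewrite ?exprn_gt0 ?addr_gt0 //;
  by rewrite lerXn2r ?nnegrE; lra.
Qed.

Lemma margin_bounds (C W : R) : 0 < C -> 640 * C + 1 <= W ->
  10 * C * (W ^- 2) ^+ 2 <= 320 * C * (W / (W + 1) ^+ 5) <= W ^- 2 / 2.
Proof.
move=> C0 CW; have W1 : 1 <= W by lra.
have Wpos : 0 < W by lra.
have W0 : W != 0 by rewrite gt_eqF.
have /andP[lo hi] := pow5_shift_bounds W1.
have C320 : 0 <= 320 * C by lra.
have -> : (W ^- 2) ^+ 2 = W ^- 4 by field.
apply/andP; split.
  rewrite (_ : 10 * C * W ^- 4 = 320 * C * (W ^- 4 / 32)); last by field.
  exact: ler_wpM2l.
apply: le_trans (ler_wpM2l C320 hi) _.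
have CW2 : 640 * C <= W ^+ 2 by rewrite expr2; nra.
rewrite -subr_ge0 (_ : _ - _ = W ^- 4 * (W ^+ 2 - 640 * C) / 2); last by field.
have : 0 <= W ^- 4 * (W ^+ 2 - 640 * C).
  by rewrite mulr_ge0 ?subr_ge0 // invr_ge0 exprn_ge0 // ltW.
lra.
Qed.

Lemma scaled_rho_bounds (C p0 W rho : R) : 0 < C -> 0 < W ->
  rho <= (1 + Num.min p0 (2 * C)^-1) / W ->
  W * rho - 1 <= p0 /\ 2 * C * (W * rho - 1) <= 1.
Proof.
move=> C0 W0; rewrite ler_pdivlMr // => rhoU.
have pm : W * rho - 1 <= Num.min p0 (2 * C)^-1 by rewrite mulrC; lra.
split; first by apply: le_trans pm _; rewrite ge_min lexx.
rewrite -ler_pdivlMl ?mulr1; last lra.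
by apply: le_trans pm _; rewrite ge_min lexx orbT.
Qed.

End threshold_arithmetic.

Section window.
Variables (R : realType) (C p0 : R).
Hypothesis hC : 0 < C.
Hypothesis Hthr : forall p q : R, 0 < p <= p0 -> 0 <= q <= 1 ->
  (q < 2 / 5 * p * (1 - C * p) -> survives p q) /\
  (2 / 5 * p * (1 + C * p) < q -> dies_out p q).

Lemma critical_window (a e p : R) : 0 < a <= 1 ->
  10 * C * a ^+ 2 <= e <= a / 2 -> -1 < p -> p <= p0 -> 2 * C * p <= 1 ->
  (5 / 2 * a + e < p -> survives p a) /\ (p < 5 / 2 * a - e -> dies_out p a).
Proof.
move=> /andP[a0 a1] /andP[eL eU] p_gt pp0 Cp.
have q01 : 0 <= a <= 1 by rewrite ltW.
have Ca : 0 < C * a ^+ 2 by rewrite mulr_gt0 ?exprn_gt0.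
split=> [sp | ps].
  apply: (Hthr _ q01).1; first by rewrite pp0 andbT; lra.
  by apply: survival_margin hC eU _ sp Cp; lra.
have [p_le0 | p_gt0] := lerP p 0.
  exact: dies_out_subcritical p_gt (ltW a0) a1 p_le0.
apply: (Hthr _ q01).2; first by rewrite p_gt0 pp0.
by apply: extinction_margin hC p_gt0 _ ps; lra.
Qed.

End window.

Theorem corollary1p2 (R : realType) (C p0 : R)
  (hC : 0 < C) (hp0 : 0 < p0 < 1) (hCp0 : C * p0 < 1)
  (Hthr : forall p q : R, 0 < p <= p0 -> 0 <= q <= 1 ->
     (q < 2 / 5 * p * (1 - C * p) -> survives p q) /\
     (2 / 5 * p * (1 + C * p) < q -> dies_out p q)) :
  exists C' : R, 0 < C' /\
  exists Omega0 : nat, forall Omega : nat, (Omega0 <= Omega)%N ->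
  forall rho : R, 0 < rho ->
    rho <= (1 + Num.min p0 (2 * C)^-1) / (Omega%:R - 1) ->
    let p := (Omega%:R - 1) * rho - 1 in
    let qb := (Omega%:R - 1) ^- 2 in
    let rhoc := (Omega%:R - 1)^-1 + 5 / 2 * (Omega%:R - 1) ^- 3 in
    (rhoc + C' * Omega%:R ^- 5 < rho -> survives p qb) /\
    (rho < rhoc - C' * Omega%:R ^- 5 -> dies_out p qb).
Proof.
exists (320 * C); split; first lra.
have C640 : 0 <= 640 * C by lra.
exists (Num.Def.archi_bound (640 * C)).+2 => Omega HOmega rho rho0 rhoU p qb rhoc.
have hW : 640 * C + 1 <= Omega%:R - 1.
  by have := archi_boundP C640; move: HOmega; rewrite -(ler_nat R) -addn2 natrD; lra.
set W := Omega%:R - 1 in hW rhoU p qb rhoc *.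
have W0 : 0 < W by lra.
have qb01 : 0 < qb <= 1.
  by rewrite /qb invr_gt0 exprn_gt0 //= invf_le1 ?exprn_gt0 // exprn_ege1 //; lra.
have We : W * (320 * C * Omega%:R ^- 5) = 320 * C * (W / (W + 1) ^+ 5).
  by rewrite -[Omega%:R](subrK 1) -/W mulrCA mulrA.
have Wrhoc : W * rhoc = 1 + 5 / 2 * qb by rewrite /rhoc /qb; field; rewrite lt0r_neq0.
have [pm1 pm2] := scaled_rho_bounds hC W0 rhoU.
have p_gt : -1 < W * rho - 1 by have := mulr_gt0 W0 rho0; lra.
have [above below] := critical_window hC Hthr qb01 (margin_bounds hC hW) p_gt pm1 pm2.
split=> H.
  by apply: above; move: H; rewrite -(ltr_pM2l W0) mulrDr Wrhoc We; lra.
by apply: below; move: H; rewrite -(ltr_pM2l W0) mulrBr Wrhoc We; lra.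
Qed.
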